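(* Let $\lambda$ be a non-uniform partition of $n$, and let $G\le\mathcal{S}_n$ be $\lambda$-homogeneous but not $\lambda$-transitive. Then $G$ is $2$-homogeneous, and hence primitive.
   Context: $\Omega=\{1,\ldots,n\}$. A partition of $n$ is a non-increasing sequence of positive integers with sum $n$; it is non-uniform if not all parts are equal. An ordered partition $(A_1,A_2,\ldots)$ of $\Omega$ has type $\lambda$ if $|A_i|=\lambda_i$. $G$ is $\lambda$-transitive if for any two ordered partitions $(A_i)$, $(B_i)$ of type $\lambda$ there is $g\in G$ with $A_ig=B_i$ for all $i$; $G$ is $\lambda$-homogeneous if for any two such ordered partitions there is $g\in G$ mapping the set of parts $\{A_1,A_2,\ldots\}$ onto $\{B_1,B_2,\ldots\}$. $G$ is $2$-homogeneous if it is transitive on $2$-subsets of $\Omega$. *)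

From mathcomp Require Import all_boot all_fingroup all_solvable.
Set Implicit Arguments. Unset Strict Implicit. Unset Printing Implicit Defensive.

(* Omega = {1..n} is modelled by 'I_n; permutations of Omega are {perm 'I_n}. *)

Definition is_partition (n : nat) (l : seq nat) : Prop :=
  [/\ sorted geq l, all (fun x => 0 < x) l & sumn l = n].

Definition non_uniform (l : seq nat) : Prop := ~~ constant l.

Definition ordpart_of_type (n : nat) (l : seq nat)
    (A : 'I_(size l) -> {set 'I_n}) : Prop :=
  [/\ forall i, #|A i| = nth 0 l i,
      forall i j, i != j -> [disjoint A i & A j]
    & \bigcup_(i < size l) A i = [set: 'I_n]].

Definition pimg (n : nat) (g : {perm 'I_n}) (X : {set 'I_n}) : {set 'I_n} :=
  [set g x | x in X].

Definition lambda_transitive (n : nat) (l : seq nat) (G : {group {perm 'I_n}}) : Prop :=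
  forall A B : 'I_(size l) -> {set 'I_n},
    ordpart_of_type A -> ordpart_of_type B ->
    exists2 g, g \in G & forall i, pimg g (A i) = B i.

Definition lambda_homogeneous (n : nat) (l : seq nat) (G : {group {perm 'I_n}}) : Prop :=
  forall A B : 'I_(size l) -> {set 'I_n},
    ordpart_of_type A -> ordpart_of_type B ->
    exists2 g, g \in G &
      [set pimg g (A i) | i : 'I_(size l)] = [set B i | i : 'I_(size l)].

Definition two_homogeneous (n : nat) (G : {group {perm 'I_n}}) : Prop :=
  forall S T : {set 'I_n}, #|S| = 2 -> #|T| = 2 ->
    exists2 g, g \in G & pimg g S = T.

From mathcomp Require Import all_boot all_fingroup all_solvable zify.
From Stdlib Require Import Classical.
Set Implicit Arguments. Unset Strict Implicit. Unset Printing Implicit Defensive.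

(* Let O be the G-orbit of some 2-subset and f u v the indicator of {u, v} in O.
   By lambda-homogeneity, the number of O-pairs lying inside the parts of an
   ordered partition of type lambda does not depend on the partition.  Comparing a partition with the
   one obtained by swapping two points x, y of different parts, and doing this once
   more after a second swap, shows that f x u - f y u does not depend on the third
   point u.  Summing over the parts of x and y, whose sizes differ because lambda
   is non-uniform, this difference must vanish, so f is constant on pairs and O
   contains every 2-subset.  At least three parts are available because lambda has
   a repeated part (otherwise homogeneity already gives transitivity).  Finally a
   2-homogeneous group is primitive: a block containing u, v and an element g
   with {u, v} g = {u, w} forces w into that block. *)

Lemma exists_notin (T : finType) (s : seq T) : size s < #|T| -> exists x, x \notin s.
Proof.
move=> lt_s_T; apply/existsP; apply: contraLR lt_s_T.
rewrite negb_exists -leqNgt => /forallP s_all; apply: leq_trans (card_size s).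
by apply/subset_leq_card/subsetP => x _; apply/negbNE/s_all.
Qed.

Section PermImage.
Variable n : nat.
Implicit Types (g : {perm 'I_n}) (X : {set 'I_n}) (x y : 'I_n).

Lemma card_pimg g X : #|pimg g X| = #|X|.
Proof. exact/card_imset/perm_inj. Qed.

Lemma mem_pimg g X x : (g x \in pimg g X) = (x \in X).
Proof. exact/mem_imset/perm_inj. Qed.

Lemma pimgD1 g X x : pimg g (X :\ x) = pimg g X :\ g x.
Proof.
apply/setP => u; rewrite -[u](permKV g) mem_pimg !inE mem_pimg.
by rewrite (inj_eq perm_inj).
Qed.

Lemma pimg_id g X : {in X, g =1 id} -> pimg g X = X.
Proof. by move=> gX; rewrite /pimg (eq_in_imset gX) imset_id. Qed.

Lemma pimg_tperm_id x y X : x \notin X -> y \notin X -> pimg (tperm x y) X = X.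
Proof.
move=> xX yX; apply: pimg_id => u uX; apply: tpermD.
  by apply: contraNneq xX => ->.
by apply: contraNneq yX => ->.
Qed.

Lemma pimg_tperm x y X : x \in X -> y \notin X -> pimg (tperm x y) X = y |: (X :\ x).
Proof.
move=> xX yX; rewrite -{1}(setD1K xX) /pimg imsetU1 tpermL -/(pimg _ _).
by rewrite pimg_tperm_id // ?setD11 // inE negb_and yX orbT.
Qed.

Lemma ordpart_pimg (l : seq nat) (A : 'I_(size l) -> {set 'I_n}) g :
  ordpart_of_type A -> ordpart_of_type (fun i => pimg g (A i)).
Proof.
case=> A_card A_disj A_cover; split=> [i|i j /A_disj|].
- by rewrite card_pimg A_card.
- by rewrite /pimg imset_disjoint //; exact: perm_inj.
- have pimgU := big_morph (pimg g) (imsetU g) (imset0 g).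
  by rewrite -pimgU A_cover; apply/eqP; rewrite eqEcard subsetT card_pimg /=.
Qed.

Lemma ordpart_inj (l : seq nat) (A : 'I_(size l) -> {set 'I_n}) :
  all (fun m => 0 < m) l -> ordpart_of_type A -> injective A.
Proof.
move=> l_pos [A_card A_disj _] i j Aij; apply/eqP; apply: contraT => /A_disj.
rewrite Aij -setI_eq0 setIid => /eqP Aj0.
by have := all_nthP 0 l_pos j (ltn_ord j); rewrite -A_card Aj0 cards0.
Qed.

Lemma ordpart_mem_neq (l : seq nat) (A : 'I_(size l) -> {set 'I_n}) s t a b :
  ordpart_of_type A -> s != t -> a \in A s -> b \in A t -> a != b.
Proof.
case=> _ A_disj _ st aS bT; apply: contraTneq aS => ->.
by rewrite (disjointFl (A_disj _ _ st) bT).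
Qed.

Lemma perm_of_uniq (s t : seq 'I_n) : uniq s -> uniq t -> size s = size t ->
  exists g : {perm 'I_n}, map g s = t.
Proof.
elim: s t => [|x s IHs] [|y t] //=; first by exists 1%g.
move=> /andP[xs s_uniq] /andP[yt t_uniq] [size_st].
have [g gst] := IHs t s_uniq t_uniq size_st.
exists (g * tperm (g x) y)%g; rewrite permM tpermL -[in RHS]gst; congr (_ :: _).
apply/eq_in_map => u us; rewrite permM tpermD //.
  by apply: contraNneq xs => /perm_inj ->.
by apply: contraNneq yt => ->; rewrite -gst map_f.
Qed.
End PermImage.

Section PairCount.
Variables (n : nat) (f : rel 'I_n).
Hypotheses (f_sym : symmetric f) (f_irr : irreflexive f).
Implicit Types (X : {set 'I_n}) (x y : 'I_n).

Definition pair_count X := \sum_(u in X) \sum_(v in X) f u v.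

Lemma pair_countU1 x X : x \notin X ->
  pair_count (x |: X) = pair_count X + 2 * \sum_(u in X) f x u.
Proof.
move=> xX; rewrite /pair_count.
under eq_bigr => u _ do rewrite big_setU1 //= [f u x]f_sym.
by rewrite big_setU1 //= f_irr big_split /=; lia.
Qed.

Lemma pair_count_pimg (g : {perm 'I_n}) X :
  {mono g : u v / f u v} -> pair_count (pimg g X) = pair_count X.
Proof.
move=> g_mono; rewrite /pair_count big_imset /=; last exact: in2W perm_inj.
apply: eq_bigr => u _; rewrite big_imset /=; last exact: in2W perm_inj.
by apply: eq_bigr => v _; rewrite g_mono.
Qed.

Lemma pair_count_tperm x y X : x \in X -> y \notin X ->
  pair_count (pimg (tperm x y) X) + 2 * \sum_(u in X :\ x) f x u =
  pair_count X + 2 * \sum_(u in X :\ x) f y u.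
Proof.
move=> xX yX; have yXx : y \notin X :\ x by rewrite inE negb_and yX orbT.
rewrite pimg_tperm // pair_countU1 //.
by have := pair_countU1 (negbT (setD11 x X)); rewrite setD1K // => ->; rewrite addnAC.
Qed.

Lemma sum_pimg_tperm (F : 'I_n -> nat) x y X : x \in X -> y \notin X ->
  \sum_(u in pimg (tperm x y) X) F u + F x = \sum_(u in X) F u + F y.
Proof.
move=> xX yX; have yXx : y \notin X :\ x by rewrite inE negb_and yX orbT.
rewrite pimg_tperm // big_setU1 //= (big_setD1 x xX) /=.
by rewrite addnC [F y + _]addnC addnA.
Qed.
End PairCount.

Lemma sumD2 (I : finType) (F : I -> nat) i j : i != j ->
  \sum_k F k = F i + F j + \sum_(k | (k != i) && (k != j)) F k.
Proof. by move=> ij; rewrite (bigD1 i) // (bigD1 j) 1?eq_sym //= addnA. Qed.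

Section InvariantRelation.
Variables (n : nat) (l : seq nat) (G : {group {perm 'I_n}}) (f : rel 'I_n).
Hypotheses (l_pos : all (fun m => 0 < m) l) (G_hom : lambda_homogeneous l G).
Hypotheses (f_sym : symmetric f) (f_irr : irreflexive f).
Hypothesis f_mono : forall g, g \in G -> {mono g : u v / f u v}.
Implicit Types (A B : 'I_(size l) -> {set 'I_n}) (x y z w : 'I_n).

Local Notation pc := (pair_count f).

Lemma sum_pair_count_eq A B : ordpart_of_type A -> ordpart_of_type B ->
  \sum_(i < size l) pc (A i) = \sum_(i < size l) pc (B i).
Proof.
move=> A_ord B_ord; have [g Gg gAB] := G_hom A_ord B_ord.
have gA_ord := ordpart_pimg g A_ord.
under eq_bigr => i _ do rewrite -(pair_count_pimg (A i) (f_mono Gg)).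
rewrite -(big_imset pc (in2W (ordpart_inj l_pos gA_ord))) /= gAB.
by rewrite (big_imset pc (in2W (ordpart_inj l_pos B_ord))).
Qed.

(* Compare A with the partition obtained by swapping x and y. *)
Lemma swap_balance A i j x y : ordpart_of_type A -> i != j -> x \in A i -> y \in A j ->
  \sum_(u in A i :\ x) f x u + \sum_(u in A j :\ y) f y u =
  \sum_(u in A i :\ x) f y u + \sum_(u in A j :\ y) f x u.
Proof.
move=> A_ord ij xi yj; have [_ A_disj _] := A_ord.
have yi : y \notin A i by rewrite (disjointFl (A_disj _ _ ij)).
have xj : x \notin A j by rewrite (disjointFr (A_disj _ _ ij)).
have fixed k : (k != i) && (k != j) -> pimg (tperm x y) (A k) = A k.
  case/andP=> ki kj; apply: pimg_tperm_id.
    by rewrite (disjointFl (A_disj _ _ ki) xi).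
  by rewrite (disjointFl (A_disj _ _ kj) yj).
have := sum_pair_count_eq A_ord (ordpart_pimg (tperm x y) A_ord).
rewrite !(sumD2 _ ij) (eq_bigr _ (fun k ok => congr1 pc (fixed k ok))).
move/eqP; rewrite eqn_add2r [X in pimg X (A j)]tpermC => /eqP.
have := pair_count_tperm f_sym f_irr xi yi.
have := pair_count_tperm f_sym f_irr yj xj.
lia.
Qed.

Section Configuration.
Variables (A0 : 'I_(size l) -> {set 'I_n}) (i j k : 'I_(size l)).
Hypotheses (A0_ord : ordpart_of_type A0) (ij : i != j) (ik : i != k) (jk : j != k).
Hypothesis lt_ji : nth 0 l j < nth 0 l i.

Lemma config_points : exists p1 p2 q r,
  [/\ uniq [:: p1; p2; q; r], p1 \in A0 i, p2 \in A0 i, q \in A0 j & r \in A0 k].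
Proof.
have [A0_card _ _] := A0_ord.
have A0_gt0 m : 0 < #|A0 m| by rewrite A0_card; apply: (all_nthP 0 l_pos).
have /card_gt1P[p1 [p2 [p1i p2i p12]]] : 1 < #|A0 i|.
  by rewrite A0_card; apply: leq_ltn_trans lt_ji; rewrite -A0_card.
have [/card_gt0P[q qj] /card_gt0P[r rk]] := (A0_gt0 j, A0_gt0 k).
have neq := ordpart_mem_neq A0_ord.
exists p1, p2, q, r; split=> //=; rewrite !inE !negb_or p12.
rewrite (neq _ _ _ _ ij p1i qj) (neq _ _ _ _ ik p1i rk) (neq _ _ _ _ jk qj rk).
by rewrite (neq _ _ _ _ ij p2i qj) (neq _ _ _ _ ik p2i rk).
Qed.

Lemma ordpart_place x z y w : uniq [:: x; z; y; w] ->
  exists2 A, ordpart_of_type A & [/\ x \in A i, z \in A i, y \in A j & w \in A k].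
Proof.
move=> xzyw_uniq; have [p1 [p2 [q [r [p_uniq p1i p2i qj rk]]]]] := config_points.
have [g [<- <- <- <-]] := perm_of_uniq p_uniq xzyw_uniq erefl.
by exists (fun m => pimg g (A0 m)); [exact: ordpart_pimg | rewrite !mem_pimg].
Qed.

Lemma card_gt3 : 3 < n.
Proof.
have [p1 [p2 [q [r [/card_uniqP p_card _ _ _ _]]]]] := config_points.
by have := max_card (mem [:: p1; p2; q; r]); rewrite p_card card_ord.
Qed.

Lemma rel_exchange x z y w : uniq [:: x; z; y; w] -> f x z + f y w = f y z + f x w.
Proof.
move=> xzyw_uniq; have [A A_ord [xi zi yj wk]] := ordpart_place xzyw_uniq.
have [_ A_disj _] := A_ord.
have [tx ty zix] : [/\ tperm z w x = x, tperm z w y = y & z \in A i :\ x].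
  move: xzyw_uniq; rewrite /= !inE !negb_or zi eq_sym.
  case/and4P=> /and3P[zx _ xw] /andP[zy _] yw _.
  by rewrite zx !tpermD // eq_sym.
have wix : w \notin A i :\ x by rewrite !inE (disjointFl (A_disj _ _ ik) wk) andbF.
pose B m := pimg (tperm z w) (A m).
have xBi : x \in B i by rewrite -{1}tx mem_pimg.
have yBj : y \in B j by rewrite -{1}ty mem_pimg.
have Bix : B i :\ x = pimg (tperm z w) (A i :\ x) by rewrite pimgD1 tx.
have Bj : B j = A j.
  rewrite /B pimg_tperm_id //; first by rewrite (disjointFr (A_disj _ _ ij) zi).
  by rewrite (disjointFl (A_disj _ _ jk) wk).
have := swap_balance A_ord ij xi yj.
have := swap_balance (ordpart_pimg (tperm z w) A_ord) ij xBi yBj.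
rewrite -/(B i) -/(B j) Bix Bj.
have := sum_pimg_tperm (f x) zix wix.
have := sum_pimg_tperm (f y) zix wix.
move=> Ty Tx KB KA; clear -Ty Tx KB KA; lia.
Qed.

Lemma rel_eq_left x y z : uniq [:: x; y; z] -> f x z = f y z.
Proof.
move=> xyz_uniq; have [w w_fresh] : exists w, w \notin [:: x; y; z].
  by apply: exists_notin; rewrite card_ord card_gt3.
have xzyw_uniq : uniq [:: x; z; y; w].
  move: xyz_uniq w_fresh; rewrite /= !inE !negb_or.
  case/and3P=> /andP[xy xz] yz _ /and3P[wx wy wz].
  by rewrite xz xy (eq_sym z) yz !(eq_sym _ w) wx wy wz.
have [A A_ord [xi _ yj _]] := ordpart_place xzyw_uniq.
have [A_card A_disj _] := A_ord.
have shift u : u != x -> u != y -> f x u + f y z = f y u + f x z.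
  move=> ux uy; have [-> | uz] := eqVneq u z; first exact: addnC.
  apply: rel_exchange; move: xzyw_uniq; rewrite /= !inE !negb_or.
  case/and4P=> /and3P[xz' xy _] /andP[zy _] _ _.
  by rewrite (eq_sym x u) ux xy xz' uy uz (eq_sym y z) zy.
have sum_shift (X : {set 'I_n}) : x \notin X -> y \notin X ->
    \sum_(u in X) f x u + #|X| * f y z = \sum_(u in X) f y u + #|X| * f x z.
  move=> xX yX; rewrite -!sum_nat_const -!big_split; apply: eq_bigr => u uX.
  by apply: shift; [apply: contraNneq xX => <- | apply: contraNneq yX => <-].
have yi : y \notin A i by rewrite (disjointFl (A_disj _ _ ij) yj).
have xj : x \notin A j by rewrite (disjointFr (A_disj _ _ ij) xi).
have Si : \sum_(u in A i :\ x) f x u + #|A i :\ x| * f y z =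
          \sum_(u in A i :\ x) f y u + #|A i :\ x| * f x z.
  by apply: sum_shift; rewrite in_setD1 ?eqxx // (negbTE yi) andbF.
have Sj : \sum_(u in A j :\ y) f x u + #|A j :\ y| * f y z =
          \sum_(u in A j :\ y) f y u + #|A j :\ y| * f x z.
  by apply: sum_shift; rewrite in_setD1 ?eqxx // (negbTE xj) andbF.
have K := swap_balance A_ord ij xi yj.
have card_ij : #|A j :\ y| < #|A i :\ x|.
  by move: lt_ji; rewrite -!A_card (cardsD1 x (A i)) (cardsD1 y (A j)) xi yj.
(* Subtracting Si and Sj from K leaves (|A_i| - |A_j|) (f x z - f y z) = 0. *)
move: Si Sj K; case: (f x z) (f y z) => [] [] // Si Sj K.
all: move: card_ij; clear -Si Sj K; lia.
Qed.

Lemma rel_const a b c d : a != b -> c != d -> f a b = f c d.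
Proof.
have f_eq_left x y z : x != z -> y != z -> f x z = f y z.
  move=> xz yz; have [-> // | xy] := eqVneq x y.
  by apply: rel_eq_left; rewrite /= !inE !negb_or xy xz yz.
move=> ab cd; have dc : d != c by rewrite eq_sym.
have [cb | cb] := eqVneq c b; first by rewrite cb [RHS]f_sym (f_eq_left a d) // -cb.
have bc : b != c by rewrite eq_sym.
by rewrite (f_eq_left a c) // f_sym (f_eq_left b d) // f_sym.
Qed.

End Configuration.
End InvariantRelation.

Section OrbitPair.
Variables (n : nat) (G : {group {perm 'I_n}}) (S : {set 'I_n}).

Definition orbit_pair (u v : 'I_n) := (u != v) && ([set u; v] \in orbit 'P^* G S).

Lemma orbit_pair_sym : symmetric orbit_pair.
Proof. by move=> u v; rewrite /orbit_pair eq_sym setUC. Qed.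

Lemma orbit_pair_irr : irreflexive orbit_pair.
Proof. by move=> u; rewrite /orbit_pair eqxx. Qed.

Lemma orbit_pair_mono g : g \in G -> {mono g : u v / orbit_pair u v}.
Proof.
move=> Gg u v; rewrite /orbit_pair (inj_eq perm_inj); congr (_ && _).
have -> : [set g u; g v] = ('P^*)%act [set u; v] g by rewrite /= /setact imsetU1 imset_set1.
by rewrite orbit_sym orbit_act // orbit_sym.
Qed.

End OrbitPair.

Section TwoHomogeneous.
Variables (n : nat) (G : {group {perm 'I_n}}).
Hypotheses (n_gt2 : 2 < n) (G_2hom : two_homogeneous G).

Lemma two_homogeneous_move x y : exists2 g, g \in G & g x = y.
Proof.
have [-> | xy] := eqVneq x y; first by exists 1%g; rewrite ?group1 ?perm1.
have [z] : exists z, z \notin [:: x; y] by apply: exists_notin; rewrite card_ord.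
rewrite !inE negb_or => /andP[zx zy].
have card_pair a : z != a -> #|[set a; z]| = 2 by move=> za; rewrite cards2 eq_sym za.
have [g Gg gxz] := G_2hom (card_pair x zx) (card_pair y zy).
have := mem_pimg g [set x; z] x; have := mem_pimg g [set x; z] z.
rewrite gxz !inE !eqxx orbT => /orP[] /eqP gz /orP[] /eqP gx.
- by rewrite -gz in gx; move: zx; rewrite (perm_inj gx) eqxx.
- by exists (g * g)%g; rewrite ?groupM // permM gx gz.
- by exists g.
- by rewrite -gz in gx; move: zx; rewrite (perm_inj gx) eqxx.
Qed.

Lemma two_homogeneous_transitive : [transitive G, on [set: 'I_n] | 'P].
Proof.
have x0 : 'I_n := Ordinal (ltnW (ltnW n_gt2)).
apply/imsetP; exists x0 => //; apply/eqP; rewrite eqEsubset subsetT andbT.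
by apply/subsetP => y _; apply/orbitP; apply: two_homogeneous_move.
Qed.

Lemma two_homogeneous_primitive : [primitive G, on [set: 'I_n] | 'P].
Proof.
apply/andP; split; first exact: two_homogeneous_transitive.
apply/existsP => -[Q /and3P[Q_part Q_acts /andP[Q_gt1 Q_lt]]].
have [_ Q_triv Q_0] := and3P Q_part.
have blockE := def_pblock Q_triv.
have [X XQ X_gt1] : exists2 X, X \in Q & 1 < #|X|.
  apply/exists_inP; apply: contraLR Q_lt; rewrite negb_exists_in -leqNgt => /forall_inP Q_small.
  rewrite (card_partition Q_part) -sum1_card; apply: leq_sum => B /Q_small.
  by rewrite ltnNge negbK.
have [Y /setD1P[YX YQ]] : exists Y, Y \in Q :\ X.
  by apply/card_gt0P; move: Q_gt1; rewrite (cardsD1 X) XQ.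
have [w wY] : exists w, w \in Y by apply/set0Pn; apply: contraNneq Q_0 => <-.
have [u [v [uX vX uv]]] := card_gt1P X_gt1.
have uw : u != w.
  by apply: contraNneq YX => uw; rewrite -(blockE _ _ YQ wY) -uw (blockE _ _ XQ uX).
have card_uv : #|[set u; v]| = 2 by rewrite cards2 uv.
have card_uw : #|[set u; w]| = 2 by rewrite cards2 uw.
have [g Gg guv] := G_2hom card_uv card_uw.
have gXQ : pimg g X \in Q := etrans ((actsP Q_acts) g Gg X) XQ.
have : [set u; w] \subset pimg g X.
  by rewrite -guv; apply: imsetS; rewrite subUset !sub1set uX vX.
rewrite subUset !sub1set => /andP[ugX wgX].
move: YX; rewrite -(blockE _ _ YQ wY) (blockE _ _ gXQ wgX) -(blockE _ _ gXQ ugX).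
by rewrite (blockE _ _ XQ uX) eqxx.
Qed.

End TwoHomogeneous.

Lemma uniq_homogeneous_transitive n (l : seq nat) (G : {group {perm 'I_n}}) :
  uniq l -> lambda_homogeneous l G -> lambda_transitive l G.
Proof.
move=> l_uniq G_hom A B A_ord B_ord; have [g Gg gAB] := G_hom A B A_ord B_ord.
exists g => // i; have [A_card _ _] := A_ord; have [B_card _ _] := B_ord.
have /imsetP[t _ gAi] : pimg g (A i) \in [set B t | t : 'I_(size l)].
  by rewrite -gAB; apply/imsetP; exists i.
suff it : i = t by rewrite gAi it.
apply/val_inj/eqP; rewrite -(nth_uniq 0 (ltn_ord i) (ltn_ord t) l_uniq).
by rewrite -A_card -B_card -gAi card_pimg.
Qed.

Lemma exists_three_parts (s : seq nat) : ~~ constant s -> ~~ uniq s ->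
  exists i j k : 'I_(size s), [/\ i != j, i != k, j != k & nth 0 s j < nth 0 s i].
Proof.
move=> s_nconst s_nuniq.
have size_s : 2 < size s.
  rewrite ltnNge; apply: contra s_nuniq.
  by case: s s_nconst => [|a [|b [|c t]]] //=; rewrite !inE !andbT eq_sym => ab _.
have [p [q [ps qs lt_pq]]] : exists p q, [/\ p < size s, q < size s & nth 0 s p < nth 0 s q].
  case: s s_nconst {size_s s_nuniq} => [|a t] //= /allPn[b bt ba].
  have [m mt tm] := nthP 0 bt.
  case: (ltngtP a b) ba => [ab _ | ba _ | ->]; last by rewrite /= eqxx.
    by exists 0, m.+1; rewrite /= tm.
  by exists m.+1, 0; rewrite /= tm.
pose i := Ordinal qs; pose j := Ordinal ps.
have ij : i != j by apply: contraTneq lt_pq => -[->]; rewrite ltnn.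
have [k] : exists k, k \notin [:: i; j] by apply: exists_notin; rewrite card_ord.
by rewrite !inE negb_or => /andP[ki kj]; exists i, j, k; rewrite !(eq_sym _ k).
Qed.

Theorem lemma4p2 (n : nat) (l : seq nat) (G : {group {perm 'I_n}}) :
  is_partition n l -> non_uniform l ->
  lambda_homogeneous l G -> ~ lambda_transitive l G ->
  two_homogeneous G /\ [primitive G, on [set: 'I_n] | 'P].
Proof.
move=> [_ l_pos _] l_nconst G_hom G_ntrans.
have [[A0 A0_ord] | no_ordpart] := classic (exists A, @ordpart_of_type n l A); last first.
  by case: G_ntrans => A B A_ord; case: no_ordpart; exists A.
have l_nuniq : ~~ uniq l.
  by apply/negP => l_uniq; apply/G_ntrans/uniq_homogeneous_transitive.
have [i [j [k [ij ik jk lt_ji]]]] := exists_three_parts l_nconst l_nuniq.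
have G_2hom : two_homogeneous G.
  move=> S T /eqP/cards2P[s [t [st ->]]] /eqP/cards2P[u [v [uv ->]]].
  have : orbit_pair G [set s; t] u v.
    rewrite (rel_const l_pos G_hom (orbit_pair_sym G _) (orbit_pair_irr G _)
      (@orbit_pair_mono _ G _) A0_ord ij ik jk lt_ji uv st).
    by rewrite /orbit_pair st orbit_refl.
  by case/andP=> _ /orbitP[g Gg gST]; exists g.
split=> //; apply: two_homogeneous_primitive G_2hom.
exact: ltnW (card_gt3 l_pos A0_ord ij ik jk lt_ji).
Qed.
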